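(* Let $n \geq 2$ be an integer. Consider $n$ independent random variables $X_1, \dots, X_n$, each taking values in the non-negative integers and each with $\mathbb{E}[X_i] = 1$ (not necessarily identically distributed), and write $p_i(j) = P(X_i = j)$. Among all such choices of the distributions $p_1, \dots, p_n$, consider one that minimizes $P\left(\sum_{i=1}^n X_i \leq n\right)$. Then for such a minimizing choice, $p_i(j) = 0$ for all $j > n+1$ and all $i = 1, \dots, n$.
   Context: The minimization is over all $n$-tuples of probability mass functions $p_1,\dots,p_n$ on $\{0,1,2,\dots\}$ with $\sum_j j\,p_i(j) = 1$ for each $i$, the $X_i$ being independent with these laws; the minimum is attained. *)

From HB Require Import structures.
From mathcomp Require Import all_boot all_order all_algebra.
From mathcomp Require Import all_classical all_reals all_analysis.
Set Implicit Arguments. Unset Strict Implicit. Unset Printing Implicit Defensive.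
Import Order.TTheory GRing.Theory Num.Theory numFieldNormedType.Exports.
Local Open Scope classical_set_scope.
Local Open Scope ring_scope.

Definition admissible (R : realType) (n : nat) (p : 'I_n -> nat -> R) : Prop :=
  forall i : 'I_n,
    (forall j, 0 <= p i j) /\
    (series (p i) @ \oo --> (1 : R)) /\
    (series (fun j => j%:R * p i j) @ \oo --> (1 : R)).

(* P(X_1 + ... + X_n <= n) for independent X_i with laws p i:
   sum over all outcomes (j_1,...,j_n) with j_1+...+j_n <= n (so each j_i <= n)
   of the product of the point masses. *)
Definition prob_sum_le (R : realType) (n : nat) (p : 'I_n -> nat -> R) : R :=
  \sum_(f : {ffun 'I_n -> 'I_n.+1} | (\sum_(i < n) (f i : nat) <= n)%N)
     \prod_(i < n) p i (f i).

From HB Require Import structures.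
From mathcomp Require Import all_boot all_order all_algebra.
From mathcomp Require Import all_classical all_reals all_analysis.
From mathcomp Require Import ring lra zify.
Set Implicit Arguments. Unset Strict Implicit. Unset Printing Implicit Defensive.
Import Order.TTheory GRing.Theory Num.Theory numFieldNormedType.Exports.
Local Open Scope classical_set_scope.
Local Open Scope ring_scope.

(* If P(X_i = j) > 0 for some j > n + 1, then, as E X_i = 1, X_i also has an
   atom m in {0, 1}.  A small multiple of the signed measure with weights
   (n + 1 - j, j - m, m - n - 1) at (m, n + 1, j) moves mass from m and j to
   n + 1 without changing total mass or mean.  Outcomes with X_i > n never
   satisfy X_1 + ... + X_n <= n, so P(X_1 + ... + X_n <= n) only feels the loss
   at m; it strictly decreases, because the outcome in which every X_k sits at
   an atom in {0, 1} has positive probability.  This contradicts minimality. *)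

Lemma sum_nat_indicator (R : comPzRingType) (c N : nat) (g : nat -> R) :
  (c < N)%N -> \sum_(0 <= k < N) (k == c)%:R * g k = g c.
Proof.
elim: N => [//|N IH]; rewrite ltnS leq_eqVlt big_nat_recr //=.
case/orP=> [/eqP <-|/[dup] cN /IH ->]; last by rewrite gtn_eqF // mul0r addr0.
rewrite eqxx mul1r big1_seq ?add0r // => k /[!mem_index_iota] /andP[_ kN].
by rewrite ltn_eqF // mul0r.
Qed.

Definition mean1_pmf (R : realType) (p : nat -> R) : Prop :=
  (forall j, 0 <= p j) /\
  (series p @ \oo --> (1 : R)) /\
  (series (fun j => j%:R * p j) @ \oo --> (1 : R)).

Lemma mean1_pmf_atom01 (R : realType) (p : nat -> R) :
  mean1_pmf p -> 0 < p 0%N \/ 0 < p 1%N.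
Proof.
case=> p_ge0 [mass1 mean1]; rewrite !lt_def !p_ge0 !andbT.
apply/orP; apply: contraT; rewrite negb_or !negbK => /andP[/eqP p0 /eqP p1].
(* Otherwise j p j >= 2 p j for every j, so the mean is at least twice the mass. *)
suff : (1 + 1 : R) <= 1 by lra.
apply: (ler_cvg_to (cvgD mass1 mass1) mean1); apply: nearW => N /=.
rewrite [X in X <= _]/GRing.add /= /series /= -big_split /=.
apply: ler_sum => -[|[|k]] _; rewrite ?p0 ?p1 ?mulr0 ?addr0 //.
have : (2 : R) <= k.+2%:R by rewrite ler_nat.
have := p_ge0 k.+2; nra.
Qed.

Definition low_atom (R : numDomainType) (p : nat -> R) : nat :=
  if 0 < p 0%N then 0%N else 1%N.

Lemma low_atom_le1 (R : numDomainType) (p : nat -> R) : (low_atom p <= 1)%N.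
Proof. by rewrite /low_atom; case: ifP. Qed.

Lemma mean1_pmf_low_atom_gt0 (R : realType) (p : nat -> R) :
  mean1_pmf p -> 0 < p (low_atom p).
Proof.
move=> /mean1_pmf_atom01 [p0|p1]; rewrite /low_atom; first by rewrite p0.
by case: ifP.
Qed.

Definition inward_move (R : pzRingType) (m c j x : nat) : R :=
  (x == m)%:R * (c%:R - j%:R) + (x == c)%:R * (j%:R - m%:R)
  + (x == j)%:R * (m%:R - c%:R).

Section InwardMoveSums.

Variables (R : comPzRingType) (m c j N : nat).
Hypotheses (mN : (m < N)%N) (cN : (c < N)%N) (jN : (j < N)%N).

Lemma sum_inward_move : \sum_(0 <= x < N) inward_move R m c j x = 0.
Proof.
rewrite /inward_move !big_split /=.
by rewrite (sum_nat_indicator _ mN) (sum_nat_indicator _ cN) (sum_nat_indicator _ jN); ring.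
Qed.

Lemma sum_mean_inward_move :
  \sum_(0 <= x < N) x%:R * inward_move R m c j x = 0.
Proof.
under eq_bigr => x _ do rewrite /inward_move 2!mulrDr !(mulrCA x%:R).
rewrite !big_split /=.
by rewrite (sum_nat_indicator _ mN) (sum_nat_indicator _ cN) (sum_nat_indicator _ jN); ring.
Qed.

End InwardMoveSums.

Section InwardMoveSign.

Variables (R : numDomainType) (m c j : nat).
Hypotheses (mc : (m < c)%N) (cj : (c < j)%N).

Let mj : (m < j)%N := ltn_trans mc cj.

Lemma inward_move_le0 x : x != c -> inward_move R m c j x <= 0.
Proof.
move/negbTE=> xc; rewrite /inward_move xc mul0r addr0.
have cjR : c%:R - j%:R <= 0 :> R by rewrite subr_le0 ler_nat ltnW.
have mcR : m%:R - c%:R <= 0 :> R by rewrite subr_le0 ler_nat ltnW.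
by apply: ler_wnDl; rewrite mulr_ge0_le0.
Qed.

Lemma inward_move_ge0 x : x != m -> x != j -> 0 <= inward_move R m c j x.
Proof.
move=> /negbTE xm /negbTE xj; rewrite /inward_move xm xj !mul0r add0r addr0.
by rewrite mulr_ge0 // subr_ge0 ler_nat ltnW.
Qed.

Lemma inward_move_left : inward_move R m c j m = c%:R - j%:R.
Proof. by rewrite /inward_move eqxx (ltn_eqF mc) (ltn_eqF mj) !mul0r !addr0 mul1r. Qed.

Lemma inward_move_right : inward_move R m c j j = m%:R - c%:R.
Proof. by rewrite /inward_move eqxx (gtn_eqF cj) (gtn_eqF mj) !mul0r !add0r mul1r. Qed.

End InwardMoveSign.

Lemma eq_partial_sums_cvg (R : realType) (u v : nat -> R) (N : nat) (l : R) :
  (forall M, (N <= M)%N -> \sum_(0 <= k < M) v k = \sum_(0 <= k < M) u k) ->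
  series u @ \oo --> l -> series v @ \oo --> l.
Proof.
move=> eq_uv; apply: cvg_trans; apply: near_eq_cvg.
by exists N => // M /= NM; rewrite /series /= eq_uv.
Qed.

Section MovedPmf.

Variables (R : realType) (p : nat -> R) (m c j : nat).
Hypotheses (mc : (m < c)%N) (cj : (c < j)%N) (pmf_p : mean1_pmf p).

Lemma mean1_pmf_inward_move (t : R) : 0 <= t ->
    t * (j%:R - c%:R) <= p m -> t * (c%:R - m%:R) <= p j ->
  mean1_pmf (fun x => p x + t * inward_move R m c j x).
Proof.
move: pmf_p => [p_ge0 [mass1 mean1]] t_ge0 tm tj; split; [|split].
- move=> x; have [->|xm] := eqVneq x m.
    by rewrite inward_move_left // -opprB mulrN subr_ge0.
  have [->|xj] := eqVneq x j.
    by rewrite inward_move_right // -opprB mulrN subr_ge0.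
  by rewrite addr_ge0 // mulr_ge0 // inward_move_ge0.
- apply: (eq_partial_sums_cvg (N := j.+1)) mass1 => M jM.
  by rewrite big_split /= -mulr_sumr sum_inward_move ?mulr0 ?addr0 //; lia.
- apply: (eq_partial_sums_cvg (N := j.+1)) mean1 => M jM.
  under eq_bigr do rewrite mulrDr mulrCA.
  by rewrite big_split /= -mulr_sumr sum_mean_inward_move ?mulr0 ?addr0 //; lia.
Qed.

Lemma exists_mean1_pmf_inward_move : 0 < p m -> 0 < p j ->
  exists2 t : R, 0 < t & mean1_pmf (fun x => p x + t * inward_move R m c j x).
Proof.
move=> pm_gt0 pj_gt0.
have jc_gt0 : 0 < j%:R - c%:R :> R by rewrite subr_gt0 ltr_nat.
have cm_gt0 : 0 < c%:R - m%:R :> R by rewrite subr_gt0 ltr_nat.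
pose t := Num.min (p m / (j%:R - c%:R)) (p j / (c%:R - m%:R)).
have t_gt0 : 0 < t by rewrite lt_min !divr_gt0.
exists t => //; apply: mean1_pmf_inward_move; first exact: ltW.
- by rewrite -ler_pdivlMr // ge_min lexx.
- by rewrite -ler_pdivlMr // ge_min lexx orbT.
Qed.

End MovedPmf.

Section ProbSumLeUpdate.

Variables (R : realType) (n : nat) (p q : 'I_n -> nat -> R) (i : 'I_n).
Hypothesis q_eq_p : forall k, k != i -> q k = p k.

Lemma prob_sum_le_update_diff :
  prob_sum_le q - prob_sum_le p =
  \sum_(f : {ffun 'I_n -> 'I_n.+1} | (\sum_(k < n) f k <= n)%N)
     (q i (f i) - p i (f i)) * \prod_(k < n | k != i) p k (f k).
Proof.
rewrite /prob_sum_le -sumrB; apply: eq_bigr => f _.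
rewrite (bigD1 i) // [in X in _ - X](bigD1 i) //=.
by rewrite (eq_bigr (fun k => p k (f k))) => [|k /q_eq_p ->]; first ring.
Qed.

Lemma prob_sum_le_update_lt (f0 : {ffun 'I_n -> 'I_n.+1}) :
    (forall k x, 0 <= p k x) ->
    (forall x, (x <= n)%N -> q i x <= p i x) ->
    q i (f0 i) < p i (f0 i) ->
    (forall k, k != i -> 0 < p k (f0 k)) ->
    (\sum_(k < n) f0 k <= n)%N ->
  prob_sum_le q < prob_sum_le p.
Proof.
move=> p_ge0 q_le_p q_lt_p f0_gt0 f0_le_n.
rewrite -subr_lt0 prob_sum_le_update_diff (bigD1 f0) //=.
have f0_lt0 : (q i (f0 i) - p i (f0 i)) * \prod_(k < n | k != i) p k (f0 k) < 0.
  by rewrite nmulr_rlt0 ?subr_lt0 // prodr_gt0.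
suff : \sum_(f : {ffun 'I_n -> 'I_n.+1} | (\sum_(k < n) f k <= n)%N && (f != f0))
    (q i (f i) - p i (f i)) * \prod_(k < n | k != i) p k (f k) <= 0 by lra.
apply: sumr_le0 => f _; rewrite mulr_le0_ge0 ?prodr_ge0 //.
by rewrite subr_le0 q_le_p // -ltnS.
Qed.

End ProbSumLeUpdate.

Theorem lemma1 (R : realType) (n : nat) (p : 'I_n -> nat -> R) :
  (2 <= n)%N ->
  admissible p ->
  (forall q : 'I_n -> nat -> R, admissible q -> prob_sum_le p <= prob_sum_le q) ->
  forall (i : 'I_n) (j : nat), (n.+1 < j)%N -> p i j = 0.
Proof.
move=> n_ge2 pmf_p p_min i j n1j; apply/eqP/contraT => pj_neq0.
pose v k := low_atom (p k).
have pj_gt0 : 0 < p i j by rewrite lt_def pj_neq0 (pmf_p i).1.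
have v_lt k : (v k < n.+1)%N :=
  leq_ltn_trans (low_atom_le1 (p k)) (ltnW n_ge2 : (1 < n.+1)%N).
have [t t_gt0 pmf_qi] := exists_mean1_pmf_inward_move
  (v_lt i) n1j (pmf_p i) (mean1_pmf_low_atom_gt0 (pmf_p i)) pj_gt0.
pose q k := if k == i then fun x => p i x + t * inward_move R (v i) n.+1 j x
            else p k.
have pmf_q : admissible q by move=> k; rewrite /q; case: eqP => // _; apply: pmf_p.
have q_eq_p k : k != i -> q k = p k by move/negbTE; rewrite /q => ->.
suff : prob_sum_le q < prob_sum_le p by rewrite ltNge p_min.
pose f0 : {ffun 'I_n -> 'I_n.+1} := [ffun k => inord (v k)].
have f0E k : (f0 k : nat) = v k by rewrite ffunE inordK.
apply: (prob_sum_le_update_lt q_eq_p (f0 := f0)).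
- by move=> k; case: (pmf_p k).
- move=> x xn; rewrite /q eqxx gerDl mulr_ge0_le0 ?(ltW t_gt0) //.
  by rewrite inward_move_le0 // neq_ltn ltnS xn.
- by rewrite /q eqxx /= f0E gtrDl inward_move_left // pmulr_rlt0 // subr_lt0 ltr_nat.
- by move=> k _; rewrite f0E; apply: mean1_pmf_low_atom_gt0.
- apply: (@leq_trans (\sum_(k < n) 1)%N); last by rewrite sum_nat_const card_ord muln1.
  by apply: leq_sum => k _; rewrite f0E low_atom_le1.
Qed.
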